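(* Let $k>l\ge 0$ be integers. For an integer $n\ge 1$ let $C_n:\{0,\dots,2^{2n}-1\}\to\{0,\dots,2^n-1\}^2$ denote the Z curve (Z-order) of order $n$, and for a sequence $t=(t_0,\dots,t_{2^{2n}-1})$ let $I_n(t)$ be the $2^n\times 2^n$ image $I_n(t)(i,j)=t_{C_n^{-1}(i,j)}$; $I_n^{-1}$ denotes the inverse map sending a $2^n\times 2^n$ image back to a sequence of length $2^{2n}$. Let $W_l$ be a $2^l\times 2^l$ array of real numbers (a convolution kernel), and for a $2^k\times 2^k$ image $I$ define the stride-$2^l$ convolution output, a $2^{k-l}\times 2^{k-l}$ image, $$O_l(I)(i,j)=\sum_{m,n\in\{0,\dots,2^l-1\}} I(i2^l+m,\,j2^l+n)\,W_l(m,n),\qquad i,j\in\{0,\dots,2^{k-l}-1\}.$$ Let $s=(s_0,\dots,s_{2^{2k}-1})$ be a sequence of real numbers, let $d\in\mathbb{N}$, $r=d\,2^{2l}$, and let $s^r$ be the circular shift $s^r(i)=s\big((i+r)\bmod 2^{2k}\big)$. Then $I_{k-l}^{-1}\circ O_l\circ I_k(s^r)$ is equal to $I_{k-l}^{-1}\circ O_l\circ I_k(s)$ up to a (circular) shift of $d$ units, i.e. for every $u\in\{0,\dots,2^{2(k-l)}-1\}$, $$\big(I_{k-l}^{-1}\circ O_l\circ I_k(s^r)\big)(u)=\big(I_{k-l}^{-1}\circ O_l\circ I_k(s)\big)\big((u+d)\bmod 2^{2(k-l)}\big).$$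
   Context: Z curve of order $n$: write an index $z\in\{0,\dots,2^{2n}-1\}$ in binary as $z=z_{2n-1}z_{2n-2}\dots z_1z_0$ ($z_i\in\{0,1\}$). Then $C_n(z)=(x,y)$ where $x$ has binary expansion $z_{2n-1}z_{2n-3}\dots z_1$ and $y$ has binary expansion $z_{2n-2}z_{2n-4}\dots z_0$ (bit interleaving). $C_n$ is a bijection from $\{0,\dots,2^{2n}-1\}$ onto $\{0,\dots,2^n-1\}^2$, so $I_n$ is a bijection between sequences of length $2^{2n}$ and $2^n\times 2^n$ images. *)

From mathcomp Require Import all_boot all_order all_algebra.
From mathcomp Require Import reals.
Set Implicit Arguments. Unset Strict Implicit. Unset Printing Implicit Defensive.
Import GRing.Theory Num.Theory.
Local Open Scope ring_scope.

Definition bit (m b : nat) : nat := odd (m %/ 2 ^ b).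

Definition zx (n z : nat) : nat := (\sum_(i < n) bit z (2 * i).+1 * 2 ^ i)%N.
Definition zy (n z : nat) : nat := (\sum_(i < n) bit z (2 * i) * 2 ^ i)%N.
Definition Zcurve (n z : nat) : nat * nat := (zx n z, zy n z).

Definition Zinv (n x y : nat) : nat :=
  (\sum_(b < n) (bit x b * 2 ^ (2 * b).+1 + bit y b * 2 ^ (2 * b)))%N.

(* sequences of length 2^(2n) and 2^n x 2^n images are represented as total
   functions on nat; only indices in range are meaningful. *)
Definition In {R : Type} (n : nat) (t : nat -> R) : nat -> nat -> R :=
  fun i j => t (Zinv n i j).
Definition In_inv {R : Type} (n : nat) (img : nat -> nat -> R) : nat -> R :=
  fun z => img (zx n z) (zy n z).

Definition Ol {R : ringType} (l : nat) (W : nat -> nat -> R)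
  (I : nat -> nat -> R) : nat -> nat -> R :=
  fun i j => \sum_(m < 2 ^ l) \sum_(n < 2 ^ l)
                I (i * 2 ^ l + m)%N (j * 2 ^ l + n)%N * W m n.

Definition cshift {R : Type} (k r : nat) (s : nat -> R) : nat -> R :=
  fun i => s ((i + r) %% 2 ^ (2 * k))%N.

From mathcomp Require Import all_boot all_order all_algebra.
From mathcomp Require Import reals.
From mathcomp Require Import zify.

(* Under the Z curve of order l + K, the pixel (X 2^l + m, Y 2^l + n) with
   m, n < 2^l sits at sequence position Zinv l m n + 4^l Zinv K X Y: the
   2^l x 2^l block (X, Y) is the contiguous run of 4^l positions starting at
   4^l times its own Z index.  Hence the output pixel with Z index u of the
   stride-2^l convolution reads exactly the run starting at 4^l u, and a
   circular shift of the input by d 4^l moves every run to the run of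
   u + d (mod 4^K), i.e. shifts the output by d. *)

Lemma bit_divn_exp x a b : bit (x %/ 2 ^ a) b = bit x (a + b).
Proof. by rewrite /bit expnD divnMA. Qed.

Lemma bit_mulexpD_lt X m l b : b < l -> bit (X * 2 ^ l + m) b = bit m b.
Proof.
move=> lt_bl; rewrite /bit -(subnK (ltnW lt_bl)) expnD mulnA divnMDl ?expn_gt0 //.
have : 0 < l - b by rewrite subn_gt0.
by case: (l - b) => // j _; rewrite oddD oddM expnS oddM /= andbF.
Qed.

Lemma bit_le1 x b : bit x b <= 1.
Proof. by rewrite /bit; case: odd. Qed.

Lemma bit01_mod4 u : bit u 1 * 2 + bit u 0 = u %% 4.
Proof. rewrite /bit -!modn2 expn1 expn0 divn1; lia. Qed.

Lemma modnD_mul_small z w A B : z < A -> (z + A * w) %% (A * B) = z + A * (w %% B).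
Proof.
move=> lt_zA; case: B => [|B]; first by rewrite muln0 !modn0.
rewrite {1}(divn_eq w B.+1) mulnDr addnCA mulnCA modnMDl modn_small //.
have := leq_mul (leqnn A) (ltn_pmod w (ltn0Sn B)); lia.
Qed.

Lemma Zinv_addn l K x y :
  Zinv (l + K) x y = Zinv l x y + 2 ^ (2 * l) * Zinv K (x %/ 2 ^ l) (y %/ 2 ^ l).
Proof.
rewrite /Zinv big_split_ord /= big_distrr /=; congr (_ + _).
apply: eq_bigr => i _; rewrite !bit_divn_exp mulnDr -addnS !expnD; lia.
Qed.

Lemma Zinv_mulexpD l X Y x y : Zinv l (X * 2 ^ l + x) (Y * 2 ^ l + y) = Zinv l x y.
Proof. by apply: eq_bigr => i _; rewrite !bit_mulexpD_lt. Qed.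

Lemma Zinv_lt n x y : Zinv n x y < 2 ^ (2 * n).
Proof.
elim: n => [|n IHn]; first by rewrite /Zinv big_ord0.
rewrite /Zinv big_ord_recr /= -/(Zinv n x y) mulnS expnD expnS.
have := bit_le1 x n; have := bit_le1 y n.
move: IHn; set P := 2 ^ (2 * n); nia.
Qed.

Lemma Zinv_block l K X Y m n : m < 2 ^ l -> n < 2 ^ l ->
  Zinv (l + K) (X * 2 ^ l + m) (Y * 2 ^ l + n) = Zinv l m n + 2 ^ (2 * l) * Zinv K X Y.
Proof.
move=> lt_m lt_n; rewrite Zinv_addn Zinv_mulexpD.
by rewrite !divnMDl ?expn_gt0 // !divn_small // !addn0.
Qed.

Lemma zxS K u : zx K.+1 u = bit u 1 + 2 * zx K (u %/ 4).
Proof.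
rewrite /zx big_ord_recl /= muln1 big_distrr /=; congr (_ + _).
apply: eq_bigr => i _.
by rewrite -[4]/(2 ^ 2) bit_divn_exp /bump /= add1n expnS mulnCA mulnS addnS.
Qed.

Lemma zyS K u : zy K.+1 u = bit u 0 + 2 * zy K (u %/ 4).
Proof.
rewrite /zy big_ord_recl /= muln1 big_distrr /=; congr (_ + _).
apply: eq_bigr => i _.
by rewrite -[4]/(2 ^ 2) bit_divn_exp /bump /= add1n expnS mulnCA mulnS.
Qed.

Lemma Zinv_zxy K u : Zinv K (zx K u) (zy K u) = u %% 2 ^ (2 * K).
Proof.
elim: K u => [|K IHK] u; first by rewrite /Zinv big_ord0 muln0 modn1.
have half_low b a : b <= 1 -> (b + 2 * a) %/ 2 ^ 1 = a by rewrite expn1; lia.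
have bit0_low b a : b <= 1 -> bit (b + 2 * a) 0 = b by rewrite /bit divn1; lia.
have Zinv1 x y : Zinv 1 x y = bit x 0 * 2 + bit y 0.
  by rewrite /Zinv big_ord1 /= expn1 muln1.
rewrite -add1n Zinv_addn zxS zyS !half_low ?bit_le1 // IHK.
rewrite Zinv1 !bit0_low ?bit_le1 //.
rewrite bit01_mod4 mulnDr expnD -modnD_mul_small ?ltn_pmod //.
by rewrite -[2 ^ (2 * 1)]/4 addnC mulnC -divn_eq.
Qed.

Lemma Zinv_block_zxy l K u m n : u < 2 ^ (2 * K) -> m < 2 ^ l -> n < 2 ^ l ->
  Zinv (l + K) (zx K u * 2 ^ l + m) (zy K u * 2 ^ l + n) = Zinv l m n + 2 ^ (2 * l) * u.
Proof. by move=> lt_u lt_m lt_n; rewrite Zinv_block // Zinv_zxy modn_small. Qed.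

Lemma modn_block_shift l K z u d : z < 2 ^ (2 * l) ->
  (z + 2 ^ (2 * l) * u + d * 2 ^ (2 * l)) %% 2 ^ (2 * (l + K)) =
  z + 2 ^ (2 * l) * ((u + d) %% 2 ^ (2 * K)).
Proof.
move=> lt_z; rewrite -addnA [d * _]mulnC -mulnDr [2 * (l + K)]mulnDr expnD.
exact: modnD_mul_small.
Qed.

Theorem lemma1 (R : realType) (k l : nat) (Hlk : (l < k)%N)
  (W : nat -> nat -> R) (s : nat -> R) (d : nat) :
  let r := (d * 2 ^ (2 * l))%N in
  forall u : nat, (u < 2 ^ (2 * (k - l)))%N ->
    In_inv (k - l) (Ol l W (In k (cshift k r s))) u =
    In_inv (k - l) (Ol l W (In k s)) ((u + d) %% 2 ^ (2 * (k - l)))%N.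
Proof.
move=> r u lt_u; rewrite /In_inv /Ol /In /cshift /r.
apply: eq_bigr => m _; apply: eq_bigr => n _; congr (s _ * _)%R.
move: (k - l) (subnKC (ltnW Hlk)) lt_u => K <- lt_u.
by rewrite !Zinv_block_zxy ?modn_block_shift ?Zinv_lt ?ltn_pmod ?expn_gt0.
Qed.
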